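(* Let $R$ be a commutative ring with unit, $X$ a set, $F\subseteq R\langle X\rangle$ and $f\in(F)$, the two-sided ideal generated by $F$. Then for every labelled quiver $Q$ with labels $X$ such that all elements of $F$ are uniformly compatible with $Q$, we have: $f$ is compatible with $Q$ if and only if $f$ is a $Q$-consequence of $F$.
   Context: $R\langle X\rangle$ is the free algebra of noncommutative polynomials over $R$ in indeterminates $X$, with monomials the words in $\langle X\rangle$ (including the empty word $1$); $\operatorname{supp}(f)$ is the set of monomials with nonzero coefficient. A labelled quiver $Q=(V,E,X,s,t,l)$ has vertices $V$, edges $E$, source/target maps $s,t:E\to V$ and labelling $l:E\to X$. A nonempty path $p=e_n\cdots e_1$ (with $s(e_{i+1})=t(e_i)$) has label $l(e_n)\cdots l(e_1)$, source $s(e_1)$, target $t(e_n)$; each vertex $v$ has an empty path with label $1$ and source and target $v$. For a monomial $m$, $\sigma(m)=\{(s(p),t(p)) : p \text{ a path with } l(p)=m\}$; for a polynomial $f$, $\sigma(f)=\bigcap_{m\in\operatorname{supp}(f)}\sigma(m)$ (so $\sigma(0)=V\times V$). $f$ is compatible with $Q$ if $\sigma(f)\neq\emptyset$, and uniformly compatible if it is compatible and all $m\in\operatorname{supp}(f)$ have the same set $\sigma(m)$; $R\langle X\rangle_Q$ is the set of uniformly compatible polynomials. For $F\subseteq R\langle X\rangle_Q$, a polynomial $f$ is a $Q$-consequence of $F$ if $f$ is compatible with $Q$ and there are finitely many $a_i,b_i\in R\langle X\rangle_Q$ and $f_i\in F$ with $f=\sum_i a_if_ib_i$ and $\sigma(a_if_ib_i)\supseteq\sigma(f)$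 for every $i$ (the empty sum is allowed). *)

From HB Require Import structures.
From Stdlib Require List.
From mathcomp Require Import all_boot all_algebra.
Set Implicit Arguments. Unset Strict Implicit. Unset Printing Implicit Defensive.
Import GRing.Theory.
Local Open Scope ring_scope.

(* Noncommutative polynomials R<X>: coefficient functions on words (seq X),
   the empty word [::] being the monomial 1; word x1 x2 ... xn is read left to
   right.  A polynomial is such a function with finite support. *)
Definition ncpoly (R : Type) (X : Type) := seq X -> R.

Section NC.
Variables (R : comPzRingType) (X : Type).

Definition fin_supp (p : ncpoly R X) : Prop :=
  exists s : seq (seq X), forall m, p m != 0 -> List.In m s.

Definition in_supp (p : ncpoly R X) (m : seq X) : Prop := p m != 0.

Definition ncmul (p q : ncpoly R X) : ncpoly R X :=
  fun m => \sum_(i < (size m).+1) p (take i m) * q (drop i m).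

Definition ncsum3 (l : seq (ncpoly R X * ncpoly R X * ncpoly R X)) : ncpoly R X :=
  fun m => \sum_(t <- l) ncmul (ncmul t.1.1 t.1.2) t.2 m.

Definition nceq (p q : ncpoly R X) : Prop := forall m, p m = q m.

Definition in_ideal (F : ncpoly R X -> Prop) (f : ncpoly R X) : Prop :=
  exists l : seq (ncpoly R X * ncpoly R X * ncpoly R X),
    (forall t, List.In t l -> [/\ fin_supp t.1.1, F t.1.2 & fin_supp t.2]) /\
    nceq f (ncsum3 l).
End NC.

Record quiver (X : Type) := Quiver {
  qV : Type; qE : Type;
  qs : qE -> qV; qt : qE -> qV;
  ql : qE -> X }.

Section Quiver.
Variables (X : Type) (Q : quiver X).

(* qpath v m u : there is a path with label m, source u and target v.
   A path e_n ... e_1 has label l(e_n) ... l(e_1), source s(e_1), target t(e_n);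
   the empty path at v has label [::] (= 1) and source = target = v. *)
Inductive qpath : qV Q -> seq X -> qV Q -> Prop :=
| qpath_nil v : qpath v [::] v
| qpath_cons (e : qE Q) m u :
    qpath (qs e) m u -> qpath (qt e) (ql e :: m) u.

Definition sigma_mon (m : seq X) (u v : qV Q) : Prop := qpath v m u.

Variable R : comPzRingType.

Definition sigma_pol (f : ncpoly R X) (u v : qV Q) : Prop :=
  forall m, in_supp f m -> sigma_mon m u v.

Definition compatible (f : ncpoly R X) : Prop :=
  exists u v, sigma_pol f u v.

Definition unif_compatible (f : ncpoly R X) : Prop :=
  compatible f /\
  forall m m', in_supp f m -> in_supp f m' ->
    forall u v, sigma_mon m u v <-> sigma_mon m' u v.

Definition in_RXQ (f : ncpoly R X) : Prop := fin_supp f /\ unif_compatible f.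

Definition Q_consequence (F : ncpoly R X -> Prop) (f : ncpoly R X) : Prop :=
  compatible f /\
  exists l : seq (ncpoly R X * ncpoly R X * ncpoly R X),
    (forall t, List.In t l ->
       [/\ in_RXQ t.1.1, F t.1.2, in_RXQ t.2 &
           forall u v, sigma_pol f u v ->
             sigma_pol (ncmul (ncmul t.1.1 t.1.2) t.2) u v]) /\
    nceq f (ncsum3 l).
End Quiver.

(* Write f = sum_i a_i g_i b_i and expand the outer factors into monomials, so
   that f is a sum of sandwiches c u g_i d w.  All support monomials u m' w of
   such a sandwich have the same sigma, because g_i is uniformly compatible.
   Keep exactly the sandwiches t with sigma(f) <= sigma(t).  If sigma(f) <=
   sigma(m), every sandwich with m in its support is kept, so the coefficient
   of m is unchanged; otherwise f m = 0 and every kept sandwich vanishes at m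
   too.  Compatibility of f makes sigma(f), hence the sigma of each relevant
   monomial, nonempty, which puts the outer monomials in R<X>_Q. *)

From mathcomp Require Import all_boot all_algebra.
From mathcomp Require Import boolp.
From Stdlib Require List.
Set Implicit Arguments. Unset Strict Implicit. Unset Printing Implicit Defensive.
Import GRing.Theory.
Local Open Scope ring_scope.

Lemma big1_In (T : Type) (idx : T) (op : Monoid.law idx) (I : Type)
    (s : seq I) (P : pred I) (G : I -> T) :
  (forall i, List.In i s -> P i -> G i = idx) ->
  \big[op/idx]_(i <- s | P i) G i = idx.
Proof.
elim: s => [|i s IH] G0; first by rewrite big_nil.
rewrite big_cons IH => [|j Hj]; last exact: G0 j (or_intror Hj).
by case: ifP => // Pi; rewrite G0 ?Monoid.mul1m //; left.
Qed.

Lemma In_allpairs (A B C : Type) (h : A -> B -> C) (s1 : seq A) (s2 : seq B) c :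
  List.In c [seq h a b | a <- s1, b <- s2] ->
  exists a b, [/\ List.In a s1, List.In b s2 & c = h a b].
Proof.
elim: s1 => [|a s1 IH] //= Hc.
case: (List.in_app_or _ _ _ Hc) => [/List.in_map_iff [b [<- Hb]]|].
  by exists a, b; split=> //; left.
by case/IH=> a' [b [Ha' Hb ->]]; exists a', b; split=> //; right.
Qed.

Lemma qpath_cat (X : Type) (Q : quiver X) (m1 m2 : seq X) (u v : qV Q) :
  qpath v (m1 ++ m2) u <-> exists w, qpath v m1 w /\ qpath w m2 u.
Proof.
elim: m1 v => [|x m1 IH] v /=.
  split=> [Hp|[w [Hvw Hwu]]]; first by exists v; split=> //; constructor.
  by inversion Hvw; subst.
split=> [Hp|[w [Hvw Hwu]]].
  inversion Hp as [|e m u' Hp']; subst.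
  have [w [Hvw Hwu]] := proj1 (IH _) Hp'.
  by exists w; split=> //; constructor.
inversion Hvw; subst.
by constructor; apply/IH; exists w.
Qed.

Section Polynomials.
Variables (R : comPzRingType) (X : Type).
Implicit Types (p q a g b : ncpoly R X) (m u w : seq X).

Lemma ncmul_supp p q m : ncmul p q m != 0 ->
  exists m1 m2, [/\ m = m1 ++ m2, p m1 != 0 & q m2 != 0].
Proof.
move=> Hm.
have /existsP [i /andP [Hp Hq]] :
    [exists i : 'I_(size m).+1, (p (take i m) != 0) && (q (drop i m) != 0)].
  apply: contraR Hm => /existsPn Hn; apply/eqP/big1 => i _.
  by case/nandP: (Hn i) => /negPn/eqP ->; rewrite ?mul0r ?mulr0.
by exists (take i m), (drop i m); rewrite cat_take_drop.
Qed.

Lemma ncmul_suml I (s : seq I) (G : I -> ncpoly R X) p q m :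
  (forall m, p m = \sum_(i <- s) G i m) ->
  ncmul p q m = \sum_(i <- s) ncmul (G i) q m.
Proof.
move=> Ep; rewrite /ncmul; under eq_bigr do rewrite Ep mulr_suml.
by rewrite exchange_big.
Qed.

Lemma ncmul_sumr I (s : seq I) (G : I -> ncpoly R X) p q m :
  (forall m, q m = \sum_(i <- s) G i m) ->
  ncmul p q m = \sum_(i <- s) ncmul p (G i) m.
Proof.
move=> Eq; rewrite /ncmul; under eq_bigr do rewrite Eq mulr_sumr.
by rewrite exchange_big.
Qed.

Lemma ncsum3_cat (l1 l2 : seq (ncpoly R X * ncpoly R X * ncpoly R X)) m :
  ncsum3 (l1 ++ l2) m = ncsum3 l1 m + ncsum3 l2 m.
Proof. exact: big_cat. Qed.

Definition monomial_at u p : Prop := forall m, p m != 0 -> m = u.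

Lemma fin_supp_monomial_sum p : fin_supp p ->
  exists ps : seq (ncpoly R X),
    (forall a, List.In a ps -> exists u, monomial_at u a) /\
    forall m, p m = \sum_(a <- ps) a m.
Proof.
case=> s; elim: s p => [|u s IH] p Hs.
  exists [::]; split=> // m; rewrite big_nil.
  by apply/eqP; apply: contraT => /Hs.
pose a m := if `[< m = u >] then p m else 0.
pose p' m := if `[< m = u >] then 0 else p m.
have [|ps [Hps Ep']] := IH p'.
  move=> m; rewrite /p'; case: asboolP => [_|Hmu]; first by rewrite eqxx.
  by case/Hs => // Eum; case: Hmu.
exists (a :: ps); split=> [a' [<-|/Hps] //|m].
  by exists u => m; rewrite /a; case: asboolP => // _; rewrite eqxx.
by rewrite big_cons -Ep' /a /p'; case: asboolP; rewrite ?addr0 ?add0r.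
Qed.

Lemma ncsum3_sandwiches (As Bs : seq (ncpoly R X)) a g b m :
  (forall m, a m = \sum_(a' <- As) a' m) ->
  (forall m, b m = \sum_(b' <- Bs) b' m) ->
  ncmul (ncmul a g) b m = ncsum3 [seq (a', g, b') | a' <- As, b' <- Bs] m.
Proof.
move=> Ea Eb; rewrite /ncsum3 big_allpairs_dep /=.
rewrite (ncmul_suml _ _ (fun m => ncmul_suml g m Ea)).
by apply: eq_bigr => a' _; apply: ncmul_sumr.
Qed.

Definition monomial_sandwich (F : ncpoly R X -> Prop)
    (t : ncpoly R X * ncpoly R X * ncpoly R X) : Prop :=
  [/\ exists u, monomial_at u t.1.1, F t.1.2 & exists w, monomial_at w t.2].

Lemma in_ideal_monomial_sandwiches F f : in_ideal F f ->
  exists l, (forall t, List.In t l -> monomial_sandwich F t) /\ nceq f (ncsum3 l).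
Proof.
case=> l [Hl Ef].
suff [l' [Hl' El']] : exists l', (forall t, List.In t l' -> monomial_sandwich F t)
    /\ forall m, ncsum3 l' m = ncsum3 l m.
  by exists l'; split=> // m; rewrite El'.
elim: l Hl {Ef} => [|[[a g] b] l IH] Hl; first by exists [::].
have [l' [Hl' El']] := IH (fun t Ht => Hl t (or_intror Ht)).
have [/fin_supp_monomial_sum [As [HAs EAs]] Fg
      /fin_supp_monomial_sum [Bs [HBs EBs]]] := Hl _ (or_introl erefl).
exists ([seq (a', g, b') | a' <- As, b' <- Bs] ++ l'); split.
  move=> t /(List.in_app_or _ _ _) [Ht|/Hl' //].
  have [a' [b' [Ha' Hb' ->]]] := In_allpairs Ht.
  by split; [exact: HAs | | exact: HBs].
move=> m; rewrite ncsum3_cat El' -(ncsum3_sandwiches g m EAs EBs).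
by rewrite /ncsum3 big_cons.
Qed.

Lemma sandwich_supp u w a g b m :
  monomial_at u a -> monomial_at w b -> ncmul (ncmul a g) b m != 0 ->
  exists2 m', m = u ++ m' ++ w & g m' != 0.
Proof.
move=> Ha Hb /ncmul_supp [m12 [m3 [-> /ncmul_supp [m1 [m2 [-> /Ha -> Hg]]] /Hb ->]]].
by exists m2; rewrite // catA.
Qed.

End Polynomials.

Section Sandwiches.
Variables (R : comPzRingType) (X : Type) (Q : quiver X).
Implicit Types (f g : ncpoly R X) (t : ncpoly R X * ncpoly R X * ncpoly R X).

Lemma monomial_in_RXQ u (a : ncpoly R X) (x y : qV Q) :
  monomial_at u a -> sigma_mon u x y -> in_RXQ Q a.
Proof.
move=> Ha Hu; split; first by exists [:: u] => m /Ha ->; left.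
by split=> [|m m' /Ha -> /Ha ->]; first by exists x, y => m /Ha ->.
Qed.

Lemma sandwich_sigma_mon u w (a g b : ncpoly R X) m1 m2 (x y : qV Q) :
  unif_compatible Q g -> monomial_at u a -> monomial_at w b ->
  ncmul (ncmul a g) b m1 != 0 -> ncmul (ncmul a g) b m2 != 0 ->
  sigma_mon m1 x y -> sigma_mon m2 x y.
Proof.
move=> [_ Hg] Ha Hb.
move=> /(sandwich_supp Ha Hb) [m1' -> Hg1] /(sandwich_supp Ha Hb) [m2' -> Hg2].
rewrite /sigma_mon => /qpath_cat [v [Hu /qpath_cat [v' [Hm1' Hw]]]].
apply/qpath_cat; exists v; split=> //; apply/qpath_cat; exists v'; split=> //.
exact/(Hg _ _ Hg1 Hg2).
Qed.

Definition Q_admissible f t : Prop :=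
  [/\ in_RXQ Q t.1.1, in_RXQ Q t.2 &
      forall x y : qV Q,
        sigma_pol f x y -> sigma_pol (ncmul (ncmul t.1.1 t.1.2) t.2) x y].

Lemma monomial_sandwich_admissible F f t m (x0 y0 : qV Q) :
  (forall g, F g -> unif_compatible Q g) -> monomial_sandwich F t ->
  ncmul (ncmul t.1.1 t.1.2) t.2 m != 0 -> sigma_mon m x0 y0 ->
  (forall x y : qV Q, sigma_pol f x y -> sigma_mon m x y) -> Q_admissible f t.
Proof.
case: t => [[a g] b] /= HF [[u Ha] /HF Hg [w Hb]] Hm Hm0 Hfm.
have [m' Em _] := sandwich_supp Ha Hb Hm.
move: Hm0; rewrite /sigma_mon Em => /qpath_cat [v [Hu /qpath_cat [v' [_ Hw]]]].
split; [exact: monomial_in_RXQ Hu | exact: monomial_in_RXQ Hw |].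
move=> x y /Hfm Hxy m2 Hm2; exact: sandwich_sigma_mon Hg Ha Hb Hm Hm2 Hxy.
Qed.

Lemma filter_admissible_sum F f l (x0 y0 : qV Q) :
  (forall g, F g -> unif_compatible Q g) ->
  (forall t, List.In t l -> monomial_sandwich F t) ->
  sigma_pol f x0 y0 -> nceq f (ncsum3 l) ->
  nceq f (ncsum3 (filter (fun t => `[< Q_admissible f t >]) l)).
Proof.
move=> HF Hl Hf0 Ef m; rewrite /ncsum3 big_filter.
have [Hfm|Hfm] := pselect (forall x y : qV Q, sigma_pol f x y -> sigma_mon m x y).
  rewrite Ef /ncsum3 (bigID (fun t => `[< Q_admissible f t >])) /=.
  rewrite [X in _ + X]big1_In ?addr0 // => t Ht; apply: contraNeq => Hm.
  apply/asboolP; exact: monomial_sandwich_admissible (Hl t Ht) Hm (Hfm _ _ Hf0) Hfm.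
have -> : f m = 0.
  by apply/eqP/negPn/negP => Hm; apply: Hfm => x y; apply.
rewrite big1_In // => t _ /asboolP [_ _ Hsub].
apply/eqP/negPn/negP => Hm; apply: Hfm => x y Hxy; exact: Hsub x y Hxy m Hm.
Qed.

End Sandwiches.

Theorem corollary4p3 (R : comPzRingType) (X : Type)
  (F : ncpoly R X -> Prop) (f : ncpoly R X) :
  (forall g, F g -> fin_supp g) ->
  fin_supp f -> in_ideal F f ->
  forall Q : quiver X,
    (forall g, F g -> unif_compatible Q g) ->
    (compatible Q f <-> Q_consequence Q F f).
Proof.
move=> _ _ /in_ideal_monomial_sandwiches [l [Hl Ef]] Q HF.
split=> [[x0 [y0 Hf0]]|[] //]; split; first by exists x0, y0.
exists (filter (fun t => `[< Q_admissible Q f t >]) l); split.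
  by move=> t /List.filter_In [/Hl [_ Ft _] /asboolP [Ha Hb Hsub]].
exact: filter_admissible_sum HF Hl Hf0 Ef.
Qed.
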